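(* Let $m,n,c$ be positive integers such that $c\equiv0\pmod4$, $m\equiv n\equiv1\pmod4$, and $m,n\geqslant9$. Then there exists an $\mathrm{IHS}(m,n;c)$.
   Context: An integer Heffter array set $\mathrm{IHS}(m,n;c)$ is a collection of $c$ completely filled $m\times n$ arrays with integer entries such that the absolute values of all $mnc$ entries (taken over all $c$ arrays) are exactly $1,2,\ldots,mnc$, each occurring exactly once, and in every array the entries of each row and of each column sum to $0$. *)

From mathcomp Require Import all_boot all_order all_algebra.
Set Implicit Arguments. Unset Strict Implicit. Unset Printing Implicit Defensive.
Import GRing.Theory Num.Theory.
Local Open Scope ring_scope.

Definition is_IHS (m n c : nat) (A : 'I_c -> 'I_m -> 'I_n -> int) : Prop :=
  [/\
      (forall k i j, (1 <= `|A k i j|%N <= m * n * c)%N),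
      (forall k i j k' i' j', `|A k i j|%N = `|A k' i' j'|%N ->
          (k, i, j) = (k', i', j')),
      (forall v : nat, (1 <= v <= m * n * c)%N ->
          exists k i j, `|A k i j|%N = v),
      (forall k i, \sum_(j < n) A k i j = 0) &
      (forall k j, \sum_(i < m) A k i j = 0)].

Definition IHS_exists (m n c : nat) : Prop :=
  exists A : 'I_c -> 'I_m -> 'I_n -> int, is_IHS A.

From mathcomp Require Import all_boot all_order all_algebra.
From mathcomp Require Import zify ring.
Set Implicit Arguments. Unset Strict Implicit. Unset Printing Implicit Defensive.
Import GRing.Theory Num.Theory.
Local Open Scope ring_scope.

(** Write m = 4A+5, n = 4B+5 and c = 4Q; the construction works as soon as
    m, n >= 5.  Every array is cut into an A x B grid of 4 x 4 blocks, a column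
    of A blocks of size 4 x 5, a row of B blocks of size 5 x 4 (transposed
    4 x 5 blocks) and a 5 x 5 corner, and every block gets zero line sums.

    The 16M largest values, M = 4QAB, fill the 4 x 4 blocks: such a block holds
    K + sM for 0 <= s < 16, signed by the pattern (+ - - +) x (+ - - +).  The
    values 1, ..., 20N, N = Q(4A+4B+5), form 20 levels of N values, each affine
    in N and an index t < N.  A 4 x 5 block uses all 20 levels at a common
    index, a 5 x 5 corner uses tabulated levels and index offsets, and the signs
    make all line sums vanish identically in N and t.  The arrays 4q, ..., 4q+3
    share the indices q(4A+4B+5) + [0, 4A+4B+5): 4A of them go to 4 x 5 blocks,
    4B to 5 x 4 blocks and 5 to the four corners, which together use every
    (level, index) pair once.  So the absolute values are pairwise distinct,
    and counting shows that they are exactly 1, ..., mnc. *)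

Lemma inj_bounded_onto (T : finType) (f : T -> nat) :
  injective f -> (forall x, 0 < f x <= #|T|)%N ->
  forall v, (0 < v <= #|T|)%N -> exists x, f x = v.
Proof.
move=> f_inj f_bnd v v_bnd.
have lt_pred x : ((f x).-1 < #|T|)%N by have := f_bnd x; lia.
pose g x := Ordinal (lt_pred x).
have g_inj : injective g.
  move=> x y /(congr1 val) /= e; apply: f_inj.
  by have := f_bnd x; have := f_bnd y; lia.
have v_lt : (v.-1 < #|T|)%N by lia.
have /codomP [x /(congr1 val) /= e] := inj_card_onto g_inj (eq_leq (card_ord _)) (Ordinal v_lt).
by exists x; have := f_bnd x; lia.
Qed.

Lemma is_IHS_of_injective_abs m n c (A : 'I_c -> 'I_m -> 'I_n -> int) :
  (forall k i j, (1 <= `|A k i j|%N <= m * n * c)%N) ->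
  (forall k i j k' i' j', `|A k i j|%N = `|A k' i' j'|%N -> (k, i, j) = (k', i', j')) ->
  (forall k i, \sum_(j < n) A k i j = 0) ->
  (forall k j, \sum_(i < m) A k i j = 0) ->
  is_IHS A.
Proof.
move=> bnd inj rows cols; split=> // v lt_v.
have card_cells : #|{: 'I_c * 'I_m * 'I_n}| = (m * n * c)%N.
  by rewrite !card_prod !card_ord; ring.
pose f (x : 'I_c * 'I_m * 'I_n) := `|A x.1.1 x.1.2 x.2|%N.
have f_inj : injective f by move=> [[k i] j] [[k' i'] j'] /inj.
have f_bnd x : (0 < f x <= #|{: 'I_c * 'I_m * 'I_n}|)%N by rewrite card_cells; apply: bnd.
have v_bnd : (0 < v <= #|{: 'I_c * 'I_m * 'I_n}|)%N by rewrite card_cells.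
have [[[k i] j] <-] := inj_bounded_onto f_inj f_bnd v_bnd.
by exists k, i, j.
Qed.

Lemma edivn_inj d q1 r1 q2 r2 : (r1 < d)%N -> (r2 < d)%N ->
  (q1 * d + r1 = q2 * d + r2)%N -> q1 = q2 /\ r1 = r2.
Proof. by move=> lt1 lt2 /(congr1 (edivn^~ d)); rewrite !edivn_eq // => -[]. Qed.

Lemma sum_blocks (V : nmodType) (f : nat -> V) d e B :
  \sum_(j < (d * B + e)%N) f j =
  \sum_(J < B) \sum_(0 <= r < d) f (d * J + r)%N + \sum_(0 <= r < e) f (d * B + r)%N.
Proof.
have split_at n k (g : nat -> V) :
    \sum_(0 <= j < (n + k)%N) g j = \sum_(0 <= j < n) g j + \sum_(0 <= r < k) g (n + r)%N.
  rewrite (@big_cat_nat _ _ _ n) ?leq_addr // -{2}[n]add0n big_addn addKn.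
  by under [X in _ + X]eq_bigr do rewrite addnC.
rewrite -(big_mkord xpredT) split_at; congr (_ + _).
elim: B => [|B IH]; first by rewrite muln0 big_ord0 big_geq.
by rewrite mulnSr split_at IH big_ord_recr.
Qed.

Variant coord_spec (A i : nat) : Prop :=
  | CoordBlock I p of (I < A)%N & (p < 4)%N & i = (4 * I + p)%N
  | CoordMargin p of (p < 5)%N & i = (4 * A + p)%N.

Lemma coordP A i : (i < 4 * A + 5)%N -> coord_spec A i.
Proof.
move=> lt_i; have [lt_iA|le_Ai] := ltnP i (4 * A).
  by apply: (@CoordBlock _ _ (i %/ 4) (i %% 4)); lia.
by apply: (@CoordMargin _ _ (i - 4 * A)); lia.
Qed.

Lemma mul_add_ltn q r Q d : (q < Q)%N -> (r < d)%N -> (q * d + r < Q * d)%N.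
Proof. nia. Qed.

(* Levels 0 and 1 interleave on [1, 2N], levels 2 and 3 on [2N+1, 4N], and
   level l >= 4 fills (lN, (l+1)N]. *)
Definition small_value (l N t : nat) : int :=
  match l with
  | 0 => 2 * N%:Z - 2 * t%:Z - 1
  | 1 => 2 * N%:Z - 2 * t%:Z
  | 2 => 2 * N%:Z + 2 * t%:Z + 1
  | 3 => 2 * N%:Z + 2 * t%:Z + 2
  | _ => if odd l then l%:Z * N%:Z + t%:Z + 1 else l.+1%:Z * N%:Z - t%:Z
  end.

Lemma small_value_low l N t : (l < 4)%N -> (t < N)%N ->
  0 < small_value l N t <= 4 * N%:Z.
Proof. by case: l => [|[|[|[|l]]]] // _ /= lt_tN; lia. Qed.

Lemma small_value_high l N t : (4 <= l)%N -> (t < N)%N ->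
  l%:Z * N%:Z < small_value l N t <= l.+1%:Z * N%:Z.
Proof. by case: l => [|[|[|[|l]]]] // _ lt_tN /=; case: ifP => _; nia. Qed.

Lemma small_value_inj l1 l2 N t1 t2 : (t1 < N)%N -> (t2 < N)%N ->
  small_value l1 N t1 = small_value l2 N t2 -> l1 = l2 /\ t1 = t2.
Proof.
move=> lt1 lt2 e.
have [lo1|hi1] := ltnP l1 4; have [lo2|hi2] := ltnP l2 4.
- move: e; case: l1 lo1 => [|[|[|[|]]]] //; case: l2 lo2 => [|[|[|[|]]]] //= _ _; lia.
- by have := small_value_low lo1 lt1; have := small_value_high hi2 lt2; nia.
- by have := small_value_low lo2 lt2; have := small_value_high hi1 lt1; nia.
have el : l1 = l2 by have := small_value_high hi1 lt1; have := small_value_high hi2 lt2; nia.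
split=> //; move: e; rewrite -{}el.
by case: l1 hi1 => [|[|[|[|l]]]] //= _; case: ifP => _; nia.
Qed.

Lemma small_value_bounds l N t : (l < 20)%N -> (t < N)%N ->
  0 < small_value l N t <= 20 * N%:Z.
Proof.
move=> lt_l lt_t; have [lo|hi] := ltnP l 4.
  by have := small_value_low lo lt_t; lia.
by have := small_value_high hi lt_t; nia.
Qed.

Definition sgn4 (p : nat) : int := if (p == 1)%N || (p == 2)%N then -1 else 1.

Lemma body_row_sum p (K X : int) :
  \sum_(0 <= r < 4) sgn4 p * sgn4 r * (K + X * (4 * p%:Z + r%:Z)) = 0.
Proof. by set s := sgn4 p; rewrite unlock /= /sgn4 /=; ring. Qed.

Lemma body_col_sum r (K X : int) :
  \sum_(0 <= p < 4) sgn4 p * sgn4 r * (K + X * (4 * p%:Z + r%:Z)) = 0.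
Proof. by set s := sgn4 r; rewrite unlock /= /sgn4 /=; ring. Qed.

Definition strip_sign (p r : nat) : int :=
  nth 0 (nth [::] [:: [:: 1; -1;  1; -1; -1];
                      [:: -1; 1; -1;  1;  1];
                      [:: -1; 1; -1;  1; -1];
                      [:: 1; -1;  1; -1;  1]] p) r.

Definition strip_level (p r : nat) : nat :=
  (nth 0 (nth [::] [:: [:: 1;  8; 18;  6;  4];
                      [:: 3;  9; 19;  5;  7];
                      [:: 0; 16; 14; 12; 13];
                      [:: 2; 17; 15; 11; 10]] p) r)%N.

(* The four corner blocks are circulant; over t < 4 their cells carry every
   pair (level, slot) with level < 20 and slot < 5 exactly once. *)
Definition corner_sign (t p r : nat) : int :=
  nth 0 (rotr p (nth [::] [:: [::  1;  1; -1; -1;  1];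
                              [::  1; -1; -1; -1;  1];
                              [:: -1; -1;  1; -1;  1];
                              [:: -1;  1;  1;  1; -1]] t)) r.

Definition corner_level (t p r : nat) : nat :=
  (nth 0 (rotr p (nth [::] [:: [:: 2; 11; 13; 15; 14];
                              [:: 3;  4;  7;  9; 18];
                              [:: 0; 10; 12; 17; 16];
                              [:: 1;  5;  6;  8; 19]] t)) r)%N.

Definition corner_slot (p r : nat) : nat :=
  (nth 0 (nth [::] [:: [:: 0; 3; 0; 1; 2];
                      [:: 1; 1; 4; 2; 3];
                      [:: 0; 0; 2; 0; 4];
                      [:: 1; 2; 4; 3; 1];
                      [:: 2; 3; 4; 3; 4]] p) r)%N.

Lemma strip_row_sum p N t : (p < 4)%N ->
  \sum_(0 <= r < 5) strip_sign p r * small_value (strip_level p r) N t = 0.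
Proof. by case: p => [|[|[|[|]]]] // _; rewrite unlock /strip_sign /strip_level /=; ring. Qed.

Lemma strip_col_sum r N t : (r < 5)%N ->
  \sum_(0 <= p < 4) strip_sign p r * small_value (strip_level p r) N t = 0.
Proof. by case: r => [|[|[|[|[|]]]]] // _; rewrite unlock /strip_sign /strip_level /=; ring. Qed.

Lemma corner_row_sum t p N b : (t < 4)%N -> (p < 5)%N ->
  \sum_(0 <= r < 5) corner_sign t p r *
    small_value (corner_level t p r) N (b + corner_slot p r) = 0.
Proof.
case: t => [|[|[|[|]]]] // _; case: p => [|[|[|[|[|]]]]] // _;
  by rewrite unlock /corner_sign /corner_level /corner_slot /rotr /= !(PoszD b); ring.
Qed.

Lemma corner_col_sum t r N b : (t < 4)%N -> (r < 5)%N ->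
  \sum_(0 <= p < 5) corner_sign t p r *
    small_value (corner_level t p r) N (b + corner_slot p r) = 0.
Proof.
case: t => [|[|[|[|]]]] // _; case: r => [|[|[|[|[|]]]]] // _;
  by rewrite unlock /corner_sign /corner_level /corner_slot /rotr /= !(PoszD b); ring.
Qed.

Lemma strip_level_inj p r p' r' : (p < 4)%N -> (r < 5)%N -> (p' < 4)%N -> (r' < 5)%N ->
  strip_level p r = strip_level p' r' -> p = p' /\ r = r'.
Proof.
move=> lt_p lt_r lt_p' lt_r' e.
have code_inj : {in gtn 20%N &, injective (fun x => strip_level (x %/ 5) (x %% 5))}.
  by apply/mkseq_uniqP.
have [dx mx] : ((5 * p + r) %/ 5 = p /\ (5 * p + r) %% 5 = r)%N by lia.
have [dx' mx'] : ((5 * p' + r') %/ 5 = p' /\ (5 * p' + r') %% 5 = r')%N by lia.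
suff : (5 * p + r = 5 * p' + r')%N by lia.
by apply: code_inj; rewrite ?inE /= ?dx ?mx ?dx' ?mx' //; lia.
Qed.

Lemma corner_inj t p r t' p' r' :
    (t < 4)%N -> (p < 5)%N -> (r < 5)%N -> (t' < 4)%N -> (p' < 5)%N -> (r' < 5)%N ->
  corner_level t p r = corner_level t' p' r' -> corner_slot p r = corner_slot p' r' ->
  [/\ t = t', p = p' & r = r'].
Proof.
move=> lt_t lt_p lt_r lt_t' lt_p' lt_r' el es.
pose code x :=
  (corner_level (x %/ 25) (x %/ 5 %% 5) (x %% 5), corner_slot (x %/ 5 %% 5) (x %% 5)).
have code_inj : {in gtn 100%N &, injective code} by apply/mkseq_uniqP.
have [d mp mr] : [/\ (25 * t + 5 * p + r) %/ 25 = t, (25 * t + 5 * p + r) %/ 5 %% 5 = p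
                  & (25 * t + 5 * p + r) %% 5 = r]%N by split; lia.
have [d' mp' mr'] : [/\ (25 * t' + 5 * p' + r') %/ 25 = t', (25 * t' + 5 * p' + r') %/ 5 %% 5 = p'
                  & (25 * t' + 5 * p' + r') %% 5 = r']%N by split; lia.
suff : (25 * t + 5 * p + r = 25 * t' + 5 * p' + r')%N by split; lia.
by apply: code_inj; rewrite ?inE /code ?d ?mp ?mr ?d' ?mp' ?mr' ?el ?es //; lia.
Qed.

Lemma sgn4_norm p : `|sgn4 p| = 1.
Proof. by rewrite /sgn4; case: ifP. Qed.

Lemma strip_sign_norm p r : (p < 4)%N -> (r < 5)%N -> `|strip_sign p r| = 1.
Proof. by case: p => [|[|[|[|]]]] //; case: r => [|[|[|[|[|]]]]]. Qed.

Lemma corner_sign_norm t p r : (t < 4)%N -> (p < 5)%N -> (r < 5)%N ->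
  `|corner_sign t p r| = 1.
Proof.
by case: t => [|[|[|[|]]]] //; case: p => [|[|[|[|[|]]]]] //; case: r => [|[|[|[|[|]]]]].
Qed.

Lemma strip_level_lt p r : (p < 4)%N -> (r < 5)%N -> (strip_level p r < 20)%N.
Proof. by case: p => [|[|[|[|]]]] //; case: r => [|[|[|[|[|]]]]]. Qed.

Lemma corner_level_lt t p r : (t < 4)%N -> (p < 5)%N -> (r < 5)%N ->
  (corner_level t p r < 20)%N.
Proof.
by case: t => [|[|[|[|]]]] //; case: p => [|[|[|[|[|]]]]] //; case: r => [|[|[|[|[|]]]]].
Qed.

Lemma corner_slot_lt p r : (p < 5)%N -> (r < 5)%N -> (corner_slot p r < 5)%N.
Proof. by case: p => [|[|[|[|[|]]]]] //; case: r => [|[|[|[|[|]]]]]. Qed.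

Section Construction.

Variables A B Q : nat.

Local Notation U := (4 * A + 4 * B + 5)%N.
Local Notation N := (Q * U)%N.
Local Notation M := (4 * Q * A * B)%N.

Definition cell_sign (k i j : nat) : int :=
  if (i < 4 * A)%N then
    if (j < 4 * B)%N then sgn4 (i %% 4) * sgn4 (j %% 4) else strip_sign (i %% 4) (j - 4 * B)
  else if (j < 4 * B)%N then strip_sign (j %% 4) (i - 4 * A)
  else corner_sign (k %% 4) (i - 4 * A) (j - 4 * B).

Definition cell_level (k i j : nat) : nat :=
  if (i < 4 * A)%N then strip_level (i %% 4) (j - 4 * B)
  else if (j < 4 * B)%N then strip_level (j %% 4) (i - 4 * A)
  else corner_level (k %% 4) (i - 4 * A) (j - 4 * B).

Definition cell_slot (k i j : nat) : nat :=
  if (i < 4 * A)%N then (4 * (i %/ 4) + k %% 4)%N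
  else if (j < 4 * B)%N then (4 * A + 4 * (j %/ 4) + k %% 4)%N
  else (4 * A + 4 * B + corner_slot (i - 4 * A) (j - 4 * B))%N.

Definition large_index (k i j : nat) : nat :=
  ((4 * (i %% 4) + j %% 4) * M + ((k * A + i %/ 4) * B + j %/ 4))%N.

Definition magnitude (k i j : nat) : int :=
  if (i < 4 * A)%N && (j < 4 * B)%N then (20 * N + large_index k i j).+1%:Z
  else small_value (cell_level k i j) N (k %/ 4 * U + cell_slot k i j).

Definition entry (k i j : nat) : int := cell_sign k i j * magnitude k i j.

Lemma entry_body k I J p r : (I < A)%N -> (J < B)%N -> (p < 4)%N -> (r < 4)%N ->
  entry k (4 * I + p) (4 * J + r) =
  sgn4 p * sgn4 r * ((20 * N + ((k * A + I) * B + J)).+1%:Z + M%:Z * (4 * p%:Z + r%:Z)).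
Proof.
move=> lt_I lt_J lt_p lt_r.
rewrite /entry /cell_sign /magnitude /large_index.
have [-> ->] : (4 * I + p < 4 * A)%N /\ (4 * J + r < 4 * B)%N by lia.
have [-> ->] : ((4 * I + p) %% 4 = p)%N /\ ((4 * J + r) %% 4 = r)%N by lia.
have [-> ->] : ((4 * I + p) %/ 4 = I)%N /\ ((4 * J + r) %/ 4 = J)%N by lia.
by congr (_ * _); lia.
Qed.

Lemma entry_right k I p r : (I < A)%N -> (p < 4)%N ->
  entry k (4 * I + p) (4 * B + r) =
  strip_sign p r * small_value (strip_level p r) N (k %/ 4 * U + (4 * I + k %% 4)).
Proof.
move=> lt_I lt_p; rewrite /entry /cell_sign /magnitude /cell_level /cell_slot.
have [-> ->] : (4 * I + p < 4 * A)%N /\ (4 * B + r < 4 * B)%N = false by lia.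
have [-> -> ->] : [/\ (4 * I + p) %% 4 = p, (4 * I + p) %/ 4 = I & 4 * B + r - 4 * B = r]%N.
  by split; lia.
by [].
Qed.

Lemma entry_bottom k J p r : (J < B)%N -> (r < 4)%N ->
  entry k (4 * A + p) (4 * J + r) =
  strip_sign r p * small_value (strip_level r p) N (k %/ 4 * U + (4 * A + 4 * J + k %% 4)).
Proof.
move=> lt_J lt_r; rewrite /entry /cell_sign /magnitude /cell_level /cell_slot.
have [-> ->] : (4 * A + p < 4 * A)%N = false /\ (4 * J + r < 4 * B)%N by lia.
have [-> -> ->] : [/\ (4 * J + r) %% 4 = r, (4 * J + r) %/ 4 = J & 4 * A + p - 4 * A = p]%N.
  by split; lia.
by [].
Qed.

Lemma entry_corner k p r :
  entry k (4 * A + p) (4 * B + r) =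
  corner_sign (k %% 4) p r *
    small_value (corner_level (k %% 4) p r) N (k %/ 4 * U + 4 * A + 4 * B + corner_slot p r).
Proof.
rewrite /entry /cell_sign /magnitude /cell_level /cell_slot.
have [-> ->] : (4 * A + p < 4 * A)%N = false /\ (4 * B + r < 4 * B)%N = false by lia.
have [-> ->] : (4 * A + p - 4 * A = p /\ 4 * B + r - 4 * B = r)%N by lia.
by rewrite !addnA.
Qed.

Lemma entry_row_sum k i : (i < 4 * A + 5)%N -> \sum_(j < (4 * B + 5)%N) entry k i j = 0.
Proof.
move=> lt_i; rewrite (sum_blocks (entry k i)).
case: (coordP lt_i) => [I p lt_I lt_p -> | p lt_p ->].
  rewrite big1 ?add0r => [|J _].
    by under eq_bigr => r _ do rewrite entry_right //; exact: strip_row_sum.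
  under eq_big_nat => r /andP[_ lt_r] do rewrite entry_body //.
  exact: body_row_sum.
rewrite big1 ?add0r => [|J _].
  by under eq_bigr => r _ do rewrite entry_corner; apply: corner_row_sum; rewrite ?ltn_mod.
under eq_big_nat => r /andP[_ lt_r] do rewrite entry_bottom //.
exact: strip_col_sum.
Qed.

Lemma entry_col_sum k j : (j < 4 * B + 5)%N -> \sum_(i < (4 * A + 5)%N) entry k i j = 0.
Proof.
move=> lt_j; rewrite (sum_blocks (entry k ^~ j)).
case: (coordP lt_j) => [J r lt_J lt_r -> | r lt_r ->].
  rewrite big1 ?add0r => [|I _].
    by under eq_bigr => p _ do rewrite entry_bottom //; exact: strip_row_sum.
  under eq_big_nat => p /andP[_ lt_p] do rewrite entry_body //.
  exact: body_col_sum.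
rewrite big1 ?add0r => [|I _].
  by under eq_bigr => p _ do rewrite entry_corner; apply: corner_col_sum; rewrite ?ltn_mod.
under eq_big_nat => p /andP[_ lt_p] do rewrite entry_right //.
exact: strip_col_sum.
Qed.

Lemma cell_sign_norm k i j : (i < 4 * A + 5)%N -> (j < 4 * B + 5)%N -> `|cell_sign k i j| = 1.
Proof.
move=> lt_i lt_j; rewrite /cell_sign.
case: ifP => _; [case: ifP => _ | case: ifP => _].
- by rewrite normrM !sgn4_norm mulr1.
- by apply: strip_sign_norm; rewrite ?ltn_mod //; lia.
- by apply: strip_sign_norm; rewrite ?ltn_mod //; lia.
- by apply: corner_sign_norm; rewrite ?ltn_mod //; lia.
Qed.

Lemma cell_level_lt k i j : (i < 4 * A + 5)%N -> (j < 4 * B + 5)%N -> (cell_level k i j < 20)%N.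
Proof.
move=> lt_i lt_j; rewrite /cell_level.
case: ifP => _; [|case: ifP => _].
- by apply: strip_level_lt; rewrite ?ltn_mod //; lia.
- by apply: strip_level_lt; rewrite ?ltn_mod //; lia.
- by apply: corner_level_lt; rewrite ?ltn_mod //; lia.
Qed.

Lemma cell_slot_lt k i j : (i < 4 * A + 5)%N -> (j < 4 * B + 5)%N -> (cell_slot k i j < U)%N.
Proof.
move=> lt_i lt_j; rewrite /cell_slot.
case: ifP => [lt_iA|_]; [lia | case: ifP => [lt_jB|_]; [lia|]].
have : (corner_slot (i - 4 * A) (j - 4 * B) < 5)%N by apply: corner_slot_lt; lia.
lia.
Qed.

Lemma small_index_lt k i j : (k < 4 * Q)%N -> (i < 4 * A + 5)%N -> (j < 4 * B + 5)%N ->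
  (k %/ 4 * U + cell_slot k i j < N)%N.
Proof. by move=> lt_k lt_i lt_j; apply: mul_add_ltn; [lia | exact: cell_slot_lt]. Qed.

Lemma large_index_lt k i j : (k < 4 * Q)%N -> (i < 4 * A)%N -> (j < 4 * B)%N ->
  (large_index k i j < 16 * M)%N.
Proof.
move=> lt_k lt_i lt_j; rewrite /large_index.
by apply: mul_add_ltn; [lia | apply: mul_add_ltn; [apply: mul_add_ltn|]; lia].
Qed.

Lemma cell_small_value_bounds k i j :
    (k < 4 * Q)%N -> (i < 4 * A + 5)%N -> (j < 4 * B + 5)%N ->
  0 < small_value (cell_level k i j) N (k %/ 4 * U + cell_slot k i j) <= 20 * N%:Z.
Proof.
move=> lt_k lt_i lt_j.
exact: small_value_bounds (cell_level_lt k lt_i lt_j) (small_index_lt lt_k lt_i lt_j).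
Qed.

Lemma magnitude_bounds k i j : (k < 4 * Q)%N -> (i < 4 * A + 5)%N -> (j < 4 * B + 5)%N ->
  0 < magnitude k i j <= ((4 * A + 5) * (4 * B + 5) * (4 * Q))%N%:Z.
Proof.
move=> lt_k lt_i lt_j.
have -> : ((4 * A + 5) * (4 * B + 5) * (4 * Q) = 20 * N + 16 * M)%N by ring.
rewrite /magnitude; case: ifP => [/andP[lt_iA lt_jB] | _].
  by have := large_index_lt lt_k lt_iA lt_jB; lia.
by have := cell_small_value_bounds lt_k lt_i lt_j; lia.
Qed.

Lemma large_index_inj k i j k' i' j' :
    (k < 4 * Q)%N -> (i < 4 * A)%N -> (j < 4 * B)%N ->
    (k' < 4 * Q)%N -> (i' < 4 * A)%N -> (j' < 4 * B)%N ->
  large_index k i j = large_index k' i' j' -> [/\ k = k', i = i' & j = j'].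
Proof.
move=> lt_k lt_i lt_j lt_k' lt_i' lt_j'; rewrite /large_index => e.
have inner_lt k0 i0 j0 : (k0 < 4 * Q)%N -> (i0 < 4 * A)%N -> (j0 < 4 * B)%N ->
    ((k0 * A + i0 %/ 4) * B + j0 %/ 4 < M)%N.
  by move=> *; apply: mul_add_ltn; [apply: mul_add_ltn|]; lia.
have [e_pr e_inner] :=
  edivn_inj (inner_lt _ _ _ lt_k lt_i lt_j) (inner_lt _ _ _ lt_k' lt_i' lt_j') e.
have [lt_J lt_J'] : (j %/ 4 < B /\ j' %/ 4 < B)%N by lia.
have [lt_I lt_I'] : (i %/ 4 < A /\ i' %/ 4 < A)%N by lia.
have [e_kI e_J] := edivn_inj lt_J lt_J' e_inner.
have [e_k e_I] := edivn_inj lt_I lt_I' e_kI.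
by split; lia.
Qed.

Lemma cell_level_slot_inj k i j k' i' j' :
    (i < 4 * A + 5)%N -> (j < 4 * B + 5)%N -> (i' < 4 * A + 5)%N -> (j' < 4 * B + 5)%N ->
    ~~ ((i < 4 * A) && (j < 4 * B))%N -> ~~ ((i' < 4 * A) && (j' < 4 * B))%N ->
    (k %/ 4 = k' %/ 4)%N ->
  cell_level k i j = cell_level k' i' j' -> cell_slot k i j = cell_slot k' i' j' ->
  [/\ k = k', i = i' & j = j'].
Proof.
move=> lt_i lt_j lt_i' lt_j'; rewrite !negb_and -!leqNgt => out out' e_q.
rewrite /cell_level /cell_slot.
have [iA|Ai] := ltnP i (4 * A); have [iA'|Ai'] := ltnP i' (4 * A); try (case: ifP; lia).
  move=> e_l e_s; have [e_p e_r] : (i %% 4 = i' %% 4 /\ j - 4 * B = j' - 4 * B)%N.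
    by apply: strip_level_inj e_l; rewrite ?ltn_mod //; lia.
  by split; lia.
have [jB|Bj] := ltnP j (4 * B); have [jB'|Bj'] := ltnP j' (4 * B); try lia.
  move=> e_l e_s; have [e_p e_r] : (j %% 4 = j' %% 4 /\ i - 4 * A = i' - 4 * A)%N.
    by apply: strip_level_inj e_l; rewrite ?ltn_mod //; lia.
  by split; lia.
move=> e_l e_s.
have [e_t e_p e_r] :
    [/\ k %% 4 = k' %% 4, i - 4 * A = i' - 4 * A & j - 4 * B = j' - 4 * B]%N.
  by apply: corner_inj e_l _; rewrite ?ltn_mod //; lia.
by split; lia.
Qed.

Lemma magnitude_inj k i j k' i' j' :
    (k < 4 * Q)%N -> (i < 4 * A + 5)%N -> (j < 4 * B + 5)%N ->
    (k' < 4 * Q)%N -> (i' < 4 * A + 5)%N -> (j' < 4 * B + 5)%N ->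
  magnitude k i j = magnitude k' i' j' -> [/\ k = k', i = i' & j = j'].
Proof.
move=> lt_k lt_i lt_j lt_k' lt_i' lt_j'.
rewrite /magnitude; case: ifP => [/andP[iA jB] | body]; case: ifP => [/andP[iA' jB'] | body'].
- move=> e; apply: large_index_inj => //; lia.
- by have := cell_small_value_bounds lt_k' lt_i' lt_j'; lia.
- by have := cell_small_value_bounds lt_k lt_i lt_j; lia.
move=> /small_value_inj [] //; try exact: small_index_lt.
move=> e_l /edivn_inj [] //; try exact: cell_slot_lt.
by move=> e_q e_s; apply: cell_level_slot_inj; rewrite ?body ?body'.
Qed.

Lemma entry_abs k i j : (k < 4 * Q)%N -> (i < 4 * A + 5)%N -> (j < 4 * B + 5)%N ->
  (`|entry k i j|%N)%:Z = magnitude k i j.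
Proof.
move=> lt_k lt_i lt_j; have /andP[pos _] := magnitude_bounds lt_k lt_i lt_j.
by rewrite abszE normrM cell_sign_norm // mul1r gtr0_norm.
Qed.

End Construction.

Lemma entry_is_IHS A B Q :
  is_IHS (fun (k : 'I_(4 * Q)) (i : 'I_(4 * A + 5)) (j : 'I_(4 * B + 5)) =>
            entry A B Q k i j).
Proof.
apply: is_IHS_of_injective_abs => [k i j | k i j k' i' j' e | k i | k j].
- have := magnitude_bounds (ltn_ord k) (ltn_ord i) (ltn_ord j).
  by rewrite -entry_abs.
- have [] := magnitude_inj (ltn_ord k) (ltn_ord i) (ltn_ord j)
                           (ltn_ord k') (ltn_ord i') (ltn_ord j').
    by rewrite -!entry_abs // e.
  by move=> /val_inj -> /val_inj -> /val_inj ->.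
- exact: entry_row_sum.
- exact: entry_col_sum.
Qed.

Local Close Scope ring_scope.

Theorem proposition3p2 (m n c : nat) :
  (0 < m)%N -> (0 < n)%N -> (0 < c)%N ->
  c %% 4 = 0 -> m %% 4 = 1 -> n %% 4 = 1 ->
  (9 <= m)%N -> (9 <= n)%N ->
  IHS_exists m n c.
Proof.
move=> _ _ _ c4 m4 n4 m9 n9.
have [A ->] : exists A, m = 4 * A + 5 by exists ((m - 5) %/ 4); lia.
have [B ->] : exists B, n = 4 * B + 5 by exists ((n - 5) %/ 4); lia.
have [Q ->] : exists Q, c = 4 * Q by exists (c %/ 4); lia.
by exists (fun k i j => entry A B Q k i j); apply: entry_is_IHS.
Qed.
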